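(* Consider a sequential team with a classical information structure such that additionally $\sigma(\omega_0)\subset\sigma(y^1)$. Suppose $\prod_k(\mathbb{Y}^k\times\mathbb{U}^k)$ is compact, the loss $c(\omega_0,\mathbf{u})$ is lower semi-continuous, and each measurement kernel $p_n$ is weakly continuous, i.e., $\int f(y^n)p_n(dy^n|\omega_0,u^1,\dots,u^{n-1})$ is continuous in $(\omega_0,u^1,\dots,u^{n-1})$ for every continuous and bounded $f$. Then there exists an optimal team policy which is deterministic.
   Context: Sequential team: DMs act in order $1,\dots,N$; DM $n$ observes $y^n=\eta^n(\omega,u^1,\dots,u^{n-1})\in\mathbb{Y}^n$ and chooses $u^n=\gamma^n(y^n)\in\mathbb{U}^n$ with $\gamma^n$ measurable; all spaces are standard Borel; $\omega_0$ is the cost-relevant exogenous variable and the cost is $J(\underline{\gamma})=E[c(\omega_0,\mathbf{u})]$ with $c\ge0$ measurable. The kernel $p_n$ is defined by $p_n(y^n\in\cdot|\omega_0,u^1,\dots,u^{n-1})=P(\eta^n(\omega,u^1,\dots,u^{n-1})\in\cdot\,|\,\omega_0,u^1,\dots,u^{n-1})$. The information structure is classical if $y^i$ contains all information available to DM $k$ for every $k<i$. An optimal policy attains $\inf_{\underline{\gamma}}J(\underline{\gamma})$. *)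

From HB Require Import structures.
From mathcomp Require Import all_boot all_order all_algebra.
From mathcomp Require Import all_classical all_reals all_analysis.
From mathcomp Require Import measurable_realfun.
Import numFieldNormedType.Exports.

Set Implicit Arguments.
Unset Strict Implicit.
Unset Printing Implicit Defensive.

Import Order.TTheory GRing.Theory Num.Theory.
Local Open Scope classical_set_scope.
Local Open Scope ring_scope.

HB.instance Definition _ (I : Type) (T : I -> ptopologicalType) :=
  Pointed.copy (prod_topology T) (forall i, T i).

Definition borelT (T : ptopologicalType) := g_sigma_algebraType (@open T).

Definition polish {R : realType} (T : completePseudoMetricType R) : Prop :=
  hausdorff_space T /\ exists D : set T, countable D /\ closure D = setT.

(** sigma(f) is contained in sigma(g), for f, g defined on the same
    measurable space: every f-preimage of a measurable set is a
    g-preimage of a measurable set. *)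
Definition sigma_sub {dS dA dB} {S : measurableType dS}
  {A : measurableType dA} {B : measurableType dB} (f : S -> A) (g : S -> B) :=
  forall E : set A, measurable E ->
    exists F : set B, measurable F /\ f @^-1` E = g @^-1` F.

(** The joint action vector (u^1,...,u^N) generated by the team policy
    gamma at the sample point omega: the solution of
    u^n = gamma^n (eta^n (omega, u^1..u^{n-1})), computed by N+1 rounds of
    substitution (since eta^n only depends on u^k, k < n, this yields the
    unique solution). *)
Definition team_action {N : nat} {Omega : Type}
  (Y U : 'I_N.+1 -> ptopologicalType)
  (eta : forall n : 'I_N.+1, Omega -> (forall k : 'I_N.+1, U k) -> Y n)
  (gamma : forall n : 'I_N.+1, Y n -> U n) (omega : Omega) :
  forall k : 'I_N.+1, U k :=
  iter N.+1 (fun v k => gamma k (eta k omega v)) (fun k => @point (U k)).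

Definition policy_measurable {N : nat} (Y U : 'I_N.+1 -> ptopologicalType)
  (gamma : forall n : 'I_N.+1, Y n -> U n) :=
  forall n : 'I_N.+1,
    measurable_fun setT (gamma n : borelT (Y n) -> borelT (U n)).

Definition team_cost {R : realType} {N : nat} {dO} {Omega : measurableType dO}
  (P : probability Omega R) (X0 : ptopologicalType)
  (Y U : 'I_N.+1 -> ptopologicalType)
  (w0 : Omega -> X0)
  (eta : forall n : 'I_N.+1, Omega -> (forall k : 'I_N.+1, U k) -> Y n)
  (c : (X0 * prod_topology U)%type -> \bar R)
  (gamma : forall n : 'I_N.+1, Y n -> U n) : \bar R :=
  (\int[P]_omega c (w0 omega, team_action eta gamma omega))%E.

From HB Require Import structures.
From mathcomp Require Import all_boot all_order all_algebra.
From mathcomp Require Import all_classical all_reals all_analysis.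
From mathcomp Require Import measurable_realfun lra.
Import numFieldNormedType.Exports.
Import Order.TTheory GRing.Theory Num.Theory.
Local Open Scope classical_set_scope.
Local Open Scope ring_scope.

(* Since sigma(omega_0) is contained in sigma(y^1), and y^1 is available to
   every DM under a classical information structure, each DM can recover
   omega_0. The team problem then collapses to pointwise minimisation of
   u |-> c(omega_0, u): a policy whose joint action minimises the cost for
   every omega_0 beats every other policy, whatever the measurement kernels.
   Such a minimiser can be chosen measurably. The compact metric action space
   is a continuous image of the Cantor space, and on the Cantor space the lower
   semicontinuous cost has a minimiser built bit by bit: always descend into
   the half-cylinder with the smaller infimum. Each bit is decided by comparing
   two lower semicontinuous functions of omega_0, hence is a Borel event in
   omega_0, and so an event in the sigma-field of each measurement. *)

Lemma lte_EFin_between {R : realType} (x y : \bar R) :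
  (x < y)%E -> exists r : R, (x < r%:E < y)%E.
Proof.
case: x => [r| |] //; case: y => [s| |] // lt_xy.
- exists ((r + s) / 2); rewrite !lte_fin; move: lt_xy; rewrite lte_fin => ?.
  by apply/andP; split; lra.
- by exists (r + 1); rewrite lte_fin ltry andbT; lra.
- by exists (s - 1); rewrite lte_fin ltNyr /=; lra.
- by exists 0; rewrite ltNyr ltry.
Qed.

Lemma lower_semicontinuous_comp_snd {R : realType} {X K L : topologicalType}
    (g : X * L -> \bar R) (f : K -> L) :
  lower_semicontinuous g -> continuous f ->
  lower_semicontinuous (fun p : X * K => g (p.1, f p.2)).
Proof.
move=> lsc_g cf [x t] a /lsc_g[V [[A B] /= [nA nB] AB] gV].
exists (A `*` f @^-1` B); first by exists (A, f @^-1` B) => //=; split => //; exact: cf.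
by move=> [y s] [/= Ay Bfs]; apply: gV; exact: (AB (y, f s)).
Qed.

Lemma lower_semicontinuous_inf_compact {R : realType} {X K : topologicalType}
    (G : X * K -> \bar R) :
  compact [set: K] -> lower_semicontinuous G ->
  lower_semicontinuous (fun x => ereal_inf [set G (x, t) | t in [set: K]]).
Proof.
move=> cK lsc_G x0 a /lte_EFin_between[b /andP[ab b_inf]].
have near_x0 : \forall x \near x0, [set: K] `<=` (fun t => b%:E < G (x, t))%E.
  apply: ((compact_near_coveringP _).1 cK X (nbhs x0)
    (fun x t => b%:E < G (x, t))%E (nbhs_filter x0)) => t _.
  have : (b%:E < G (x0, t))%E.
    by apply: lt_le_trans b_inf _; apply: ereal_inf_lbound; exists t.
  move=> /lsc_G[V [[A B] /= [nA nB] AB] GV].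
  by exists (B, A) => //= -[t' x'] /= [Bt' Ax']; apply: GV; exact: (AB (x', t')).
exists [set x | [set: K] `<=` (fun t => b%:E < G (x, t))%E] => // x bG.
apply: lt_le_trans ab _; apply: le_ereal_inf_tmp => _ [t _ <-]; exact/ltW/bG.
Qed.

Lemma lower_semicontinuous_borel_measurable {R : realType} {X : ptopologicalType}
    (f : X -> \bar R) :
  lower_semicontinuous f -> measurable_fun setT (f : borelT X -> \bar R).
Proof.
move=> lsc_f; apply: (measurability _ (ErealGenOInfty.measurableE R)).
move=> _ [_ [a ->] <-]; apply: measurableI => //.
by apply: sub_sigma_algebra; rewrite preimage_itvoy; exact: (lower_semicontinuousP f).1.
Qed.

Lemma continuous_borel_measurable {X Y : ptopologicalType} (f : X -> Y) :
  continuous f -> measurable_fun setT (f : borelT X -> borelT Y).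
Proof.
move=> cf; apply: (@measurability _ _ (borelT X) (borelT Y) _ _ (@open Y) erefl).
move=> _ [V oV <-]; apply: measurableI => //.
by apply: sub_sigma_algebra; exact: (continuousP f).1 cf V oV.
Qed.

Lemma measurable_fibrewise {d} {T : measurableType d} {C : countType}
    (f : T -> C) (Q : C -> set T) :
  (forall c, measurable [set x | f x = c]) -> (forall c, measurable (Q c)) ->
  measurable [set x | Q (f x) x].
Proof.
move=> mf mQ; rewrite (_ : [set x | _] = \bigcup_c ([set x | f x = c] `&` Q c)).
  apply: countable_bigcupT_measurable => [|c]; first exact: countableP.
  exact: measurableI.
by apply/seteqP; split => [x Qfx|x [c _ [/= <-]]] //; exists (f x).
Qed.

Definition cantor_cat (s : seq bool) (t : cantor_space) : cantor_space :=
  fun n => if (n < size s)%N then nth false s n else t (n - size s)%N.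

Definition cantor_cylinder (s : seq bool) : set cantor_space :=
  [set t | forall i, (i < size s)%N -> t i = nth false s i].

Lemma cantor_cat0 t : cantor_cat [::] t = t.
Proof. by apply/funext => n; rewrite /cantor_cat /= subn0. Qed.

Lemma cantor_catA s1 s2 t :
  cantor_cat (s1 ++ s2) t = cantor_cat s1 (cantor_cat s2 t).
Proof.
apply/funext => n; rewrite /cantor_cat size_cat nth_cat.
case: (ltnP n (size s1)) => [lt_n_s1|le_s1_n]; first by rewrite ltn_addr.
by rewrite ltn_subLR // subnDA.
Qed.

Lemma cantor_cat_head (t : cantor_space) :
  cantor_cat [:: t 0%N] (fun n => t n.+1) = t.
Proof. by apply/funext => -[|n]; rewrite /cantor_cat //= subn1. Qed.

Lemma cantor_cat_cylinder s t : cantor_cylinder s (cantor_cat s t).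
Proof. by move=> i lt_i_s; rewrite /cantor_cat lt_i_s. Qed.

Lemma cantor_cat_continuous s : continuous (cantor_cat s).
Proof.
move=> t; apply/(@pointwise_cvgP nat bool (cantor_cat s @ nbhs t)) => i.
change ((fun u => cantor_cat s u i) @ nbhs t --> cantor_cat s t i).
rewrite /cantor_cat; case: ltnP => _.
  exact: cvg_cst.
by move: (i - size s)%N; apply/(@pointwise_cvgP nat bool (nbhs t)); exact: cvg_id.
Qed.

Lemma cantor_nbhs_cylinder (z : cantor_space) (W : set cantor_space) :
  nbhs z W -> exists n, cantor_cylinder (mkseq z n) `<=` W.
Proof.
move=> Wz; apply: contrapT => /forallNP notW.
have /choice[tn tn_spec] : forall n, exists t, cantor_cylinder (mkseq z n) t /\ ~ W t.
  by move=> n; have /existsNP[t /not_implyP[]] := notW n; exists t.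
have tn_cvg : tn @ \oo --> z.
  apply/pointwise_cvgP => i A /nbhs_singleton Azi; exists i.+1 => // n /= lt_i_n.
  by have := (tn_spec n).1 i; rewrite size_mkseq nth_mkseq // => ->.
have [n _ Wtn] := tn_cvg W Wz.
by apply: (tn_spec n).2; apply: Wtn => /=.
Qed.

Lemma measurable_mkseq_fibre {d} {T : measurableType d} (beta : T -> cantor_space)
    n s :
  (forall i, (i < n)%N -> measurable [set y | beta y i]) ->
  measurable [set y | mkseq (beta y) n = s].
Proof.
elim: n s => [|n IHn] s mbeta.
  case: s => [|b s]; first by rewrite (_ : [set _ | _] = setT) //; apply/seteqP.
  by rewrite (_ : [set _ | _] = set0) //; apply/seteqP; split.
case/lastP: s => [|s b].
  rewrite (_ : [set _ | _] = set0) //; apply/seteqP; split => [y /= mk_nil|//].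
  by have := congr1 size mk_nil; rewrite size_mkseq.
rewrite (_ : [set _ | _] = [set y | mkseq (beta y) n = s] `&` [set y | beta y n = b]).
  apply: measurableI; first by apply: IHn => i lt_i_n; apply: mbeta; exact: ltnW.
  case: b; first exact: mbeta.
  rewrite (_ : [set y | beta y n = false] = ~` [set y | beta y n]).
    exact/measurableC/mbeta.
  by apply/seteqP; split => y /=; case: (beta y n).
apply/seteqP; split => y /=; rewrite mkseqS.
  by move=> /eqP; rewrite eqseq_rcons => /andP[/eqP -> /eqP ->].
by move=> [-> ->].
Qed.

Lemma measurable_cantor_bits {d} {T : measurableType d} (beta : T -> cantor_space) :
  (forall n, measurable [set y | beta y n]) ->
  measurable_fun setT (beta : T -> borelT cantor_space).
Proof.
move=> mbeta.
apply: (@measurability _ _ _ (borelT cantor_space) _ _ (@open cantor_space) erefl).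
move=> _ [W oW <-]; rewrite setTI.
rewrite (_ : beta @^-1` W = \bigcup_(s in [set s | cantor_cylinder s `<=` W])
    [set y | mkseq (beta y) (size s) = s]).
  rewrite bigcup_mkcond; apply: countable_bigcupT_measurable => [|s].
    exact: countableP.
  by case: ifP => // _; apply: measurable_mkseq_fibre => i _; exact: mbeta.
apply/seteqP; split => [y Wy|y [s cylW /= beta_s]] /=.
  have [n cylW] := cantor_nbhs_cylinder _ _ (open_nbhs_nbhs (conj oW Wy)).
  by exists (mkseq (beta y) n); rewrite // size_mkseq.
by apply: cylW => i lt_i_s; rewrite -[in RHS]beta_s nth_mkseq.
Qed.

Lemma continuous_cantor_bits_measurable {d} {T : measurableType d} {Z : ptopologicalType}
    (f : cantor_space -> Z) (beta : T -> cantor_space) :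
  continuous f -> (forall n, measurable [set y | beta y n]) ->
  measurable_fun setT ((fun y => f (beta y)) : T -> borelT Z).
Proof.
move=> cf mbeta.
apply: (@measurableT_comp _ _ _ T (borelT cantor_space) (borelT Z) f setT beta).
  exact: continuous_borel_measurable.
exact: measurable_cantor_bits.
Qed.

Section greedy_argmin.
Context {R : realType} {X : ptopologicalType} (g : X * cantor_space -> \bar R).
Hypothesis lsc_g : lower_semicontinuous g.
Local Open Scope ereal_scope.

Definition cylinder_inf (s : seq bool) (x : X) :=
  ereal_inf [set g (x, cantor_cat s t) | t in [set: cantor_space]].

Lemma cylinder_inf_le_cat s s' x : cylinder_inf s x <= cylinder_inf (s ++ s') x.
Proof.
apply: ereal_inf_le_tmp => _ [t _ <-].
by exists (cantor_cat s' t); rewrite // cantor_catA.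
Qed.

Lemma cylinder_inf_rcons s x : cylinder_inf s x =
  Order.min (cylinder_inf (rcons s false) x) (cylinder_inf (rcons s true) x).
Proof.
apply/eqP; rewrite eq_le le_min -!cats1 !cylinder_inf_le_cat /=.
apply: le_ereal_inf_tmp => _ [t _ <-].
rewrite -(cantor_cat_head t) -cantor_catA ge_min.
by case: (t 0%N); apply/orP; [right|left];
  apply: ereal_inf_lbound; exists (fun n => t n.+1).
Qed.

Definition greedy_bit s x :=
  cylinder_inf (rcons s true) x <= cylinder_inf (rcons s false) x.

Lemma cylinder_inf_greedy_bit s x :
  cylinder_inf (rcons s (greedy_bit s x)) x = cylinder_inf s x.
Proof.
by rewrite [RHS]cylinder_inf_rcons /greedy_bit; case: leP => [/min_r|/ltW/min_l].
Qed.

Fixpoint greedy_prefix n x :=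
  if n is k.+1 then rcons (greedy_prefix k x) (greedy_bit (greedy_prefix k x) x)
  else [::].

Definition greedy_argmin x : cantor_space := fun n => greedy_bit (greedy_prefix n x) x.

Lemma greedy_prefixE n x : greedy_prefix n x = mkseq (greedy_argmin x) n.
Proof. by elim: n => //= n IHn; rewrite mkseqS -IHn. Qed.

Lemma cylinder_inf_greedy_prefix n x :
  cylinder_inf (greedy_prefix n x) x = cylinder_inf [::] x.
Proof. by elim: n => //= n <-; exact: cylinder_inf_greedy_bit. Qed.

(* By lower semicontinuity some cylinder around [greedy_argmin x] keeps [g]
   above [a], while every prefix cylinder of [greedy_argmin x] has the global
   infimum. *)
Lemma greedy_argmin_le_inf x : g (x, greedy_argmin x) <= cylinder_inf [::] x.
Proof.
rewrite leNgt; apply/negP => /lte_EFin_between[a /andP[inf_a a_g]].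
have [V [[A B] /= [nA nB] AB] gV] := lsc_g _ _ a_g.
have [n cylB] := cantor_nbhs_cylinder _ _ nB.
suff : a%:E <= cylinder_inf [::] x by rewrite leNgt inf_a.
rewrite -(cylinder_inf_greedy_prefix n x) greedy_prefixE.
apply: le_ereal_inf_tmp => _ [t _ <-]; apply/ltW/gV/(AB (x, _)); split => /=.
  exact: nbhs_singleton.
exact/cylB/cantor_cat_cylinder.
Qed.

Lemma greedy_argmin_min x t : g (x, greedy_argmin x) <= g (x, t).
Proof.
apply: le_trans (greedy_argmin_le_inf x) _.
by apply: ereal_inf_lbound; exists t; rewrite ?cantor_cat0.
Qed.

Lemma cylinder_inf_lsc s : lower_semicontinuous (cylinder_inf s).
Proof.
apply: (lower_semicontinuous_inf_compact
  (fun p : X * cantor_space => g (p.1, cantor_cat s p.2)) cantor_space_compact).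
exact: lower_semicontinuous_comp_snd lsc_g (cantor_cat_continuous s).
Qed.

Lemma greedy_bit_measurable s : measurable [set x : borelT X | greedy_bit s x].
Proof.
have inf_meas s' := lower_semicontinuous_borel_measurable _ (cylinder_inf_lsc s').
have := measurable_lee measurableT (inf_meas (rcons s true)) (inf_meas (rcons s false)).
by rewrite setTI.
Qed.

Lemma greedy_argmin_measurable n : measurable [set x : borelT X | greedy_argmin x n].
Proof.
elim/ltn_ind: n => n IHn.
rewrite (_ : [set x | _] = [set x | greedy_bit (mkseq (greedy_argmin x) n) x]).
  apply: measurable_fibrewise greedy_bit_measurable => s.
  exact: measurable_mkseq_fibre.
by apply/seteqP; split => x; rewrite /= -greedy_prefixE.
Qed.

End greedy_argmin.

Lemma sigma_sub_trans {dS dA dB dC} {S : measurableType dS} {A : measurableType dA}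
    {B : measurableType dB} {C : measurableType dC}
    {f : S -> A} {g : S -> B} {h : S -> C} :
  sigma_sub f g -> sigma_sub g h -> sigma_sub f h.
Proof. by move=> fg gh E mE; have [F [mF ->]] := fg E mE; exact: gh. Qed.

Lemma sigma_sub_cantor_factor {dS dA dB} {S : measurableType dS}
    {A : measurableType dA} {B : measurableType dB}
    {f : S -> A} {g : S -> B} {z : A -> cantor_space} :
  sigma_sub f g -> (forall n, measurable [set a | z a n]) ->
  exists beta : B -> cantor_space,
    (forall n, measurable [set b | beta b n]) /\ forall s, z (f s) = beta (g s).
Proof.
move=> fg mz; have /choice[F F_spec] := fun n => fg _ (mz n).
exists (fun b n => `[< F n b >]); split => [n|s].
  rewrite (_ : [set b | _] = F n); first exact: (F_spec n).1.
  by apply/seteqP; split => b /asboolP.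
apply/funext => n; have /= zF := congr1 (@^~ s) (F_spec n).2.
by apply/idP/asboolP; rewrite -zF.
Qed.

Lemma compact_prod_snd {I : eqType} (A B : I -> ptopologicalType) (k : I) :
  compact [set: prod_topology (fun i => ((A i * B i)%type : topologicalType))] ->
  compact [set: B k].
Proof.
move=> cAB.
pose p (f : prod_topology (fun i => ((A i * B i)%type : topologicalType))) := (f k).2. rewrite (_ : [set: B k] = p @` setT).
  apply: continuous_compact => //; apply: continuous_subspaceT => f.
  have := @proj_continuous I (fun i => ((A i * B i)%type : topologicalType)) k f.
  by move=> /cvg_comp; apply; exact: cvg_snd.
apply/seteqP; split => // b _.
by exists (dfwith (fun i => (point, point)) k (point, b)); rewrite // /p dfwithin.
Qed.

(* Joins the pointed structure of [prod_topology] with its pseudometric for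
   countable products, so that [cantor_surj] applies to such products. *)
HB.instance Definition _ (R : realType) (I : countType) (T : I -> pseudoPMetricType R) :=
  Pointed.copy (prod_topology T) (prod_topology (fun i => T i : ptopologicalType)).

Lemma cantor_surj_prod {R : realType} {I : countType} (T : I -> pseudoPMetricType R) :
  (forall i, compact [set: T i]) -> (forall i, hausdorff_space (T i)) ->
  exists f : cantor_space -> prod_topology T, continuous f /\ forall u, exists t, f t = u.
Proof.
move=> cT hT.
have cprod : compact [set: prod_topology T].
  by have := tychonoff cT; congr (compact _); rewrite eqEsubset.
have [f f_cont] := cantor_surj cprod (hausdorff_product hT).
by exists f; split => // u; case: (@surj _ _ _ _ f u) => // t _ <-; exists t.
Qed.

Lemma team_action_static {N : nat} {Omega : Type} {Y U : 'I_N.+1 -> ptopologicalType}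
    {eta : forall n : 'I_N.+1, Omega -> (forall k : 'I_N.+1, U k) -> Y n}
    {gamma : forall n : 'I_N.+1, Y n -> U n} {omega : Omega} (a : forall k, U k) :
  (forall k u, gamma k (eta k omega u) = a k) -> team_action eta gamma omega = a.
Proof.
by move=> gamma_a; apply: functional_extensionality_dep => k; rewrite /team_action iterS.
Qed.

(* The nonnegative integral is a supremum over simple minorants, so it is
   monotone without any measurability assumption on the integrands. *)
Lemma ge0_le_integral_nomeas {d} {T : measurableType d} {R : realType}
    (mu : measure T R) (f g : T -> \bar R) :
  (forall x, 0 <= f x)%E -> (forall x, f x <= g x)%E ->
  (\int[mu]_x f x <= \int[mu]_x g x)%E.
Proof.
move=> f0 fg; have g0 x := le_trans (f0 x) (fg x).
rewrite !ge0_integralTE //; apply: ereal_sup_le => _ [h hf <-].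
by exists h => //= x; exact: le_trans (hf x) (fg x).
Qed.

Theorem mainTheorem5
  (R : realType) (N : nat)
  (* the underlying probability space *)
  (dO : measure_display) (Omega : measurableType dO) (P : probability Omega R)
  (* standard Borel (Polish) spaces: omega_0, measurements y^n, actions u^n;
     DMs are indexed by 'I_N.+1, i.e. 0 (= DM 1), ..., N (= DM N+1) *)
  (X0 : completePseudoMetricType R)
  (Y U : 'I_N.+1 -> completePseudoMetricType R)
  (hX0 : polish X0) (hY : forall n, polish (Y n)) (hU : forall n, polish (U n))
  (* cost-relevant exogenous variable omega_0 *)
  (w0 : Omega -> X0)
  (mw0 : measurable_fun setT (w0 : Omega -> borelT X0))
  (* measurement maps y^n = eta^n(omega, u^1, ..., u^{n-1}) *)
  (eta : forall n : 'I_N.+1,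
     Omega -> prod_topology (fun k => U k : ptopologicalType) -> Y n)
  (meta : forall n : 'I_N.+1,
     measurable_fun setT
       (fun p : (Omega * borelT (prod_topology (fun k => U k : ptopologicalType)))%type =>
          (eta n p.1 p.2 : borelT (Y n))))
  (eta_causal : forall (n : 'I_N.+1) omega u u',
     (forall k : 'I_N.+1, (k < n)%N -> u k = u' k) -> eta n omega u = eta n omega u')
  (* cost *)
  (c : (X0 * prod_topology (fun k => U k : ptopologicalType))%type -> \bar R)
  (c_ge0 : forall z, (0 <= c z)%E)
  (c_meas : measurable_fun setT
     (fun z : (borelT X0 * borelT (prod_topology (fun k => U k : ptopologicalType)))%type =>
          c z))
  (* classical information structure: sigma(y^k) is contained in sigma(y^i)
     for k < i (as sigma-fields on Omega x (action space)) *)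
  (classical : forall k i : 'I_N.+1, (k < i)%N ->
     sigma_sub
       (fun p : (Omega * borelT (prod_topology (fun k => U k : ptopologicalType)))%type =>
          (eta k p.1 p.2 : borelT (Y k)))
       (fun p : (Omega * borelT (prod_topology (fun k => U k : ptopologicalType)))%type =>
          (eta i p.1 p.2 : borelT (Y i))))
  (* sigma(omega_0) is contained in sigma(y^1) *)
  (w0_y1 :
     sigma_sub
       (fun p : (Omega * borelT (prod_topology (fun k => U k : ptopologicalType)))%type =>
          (w0 p.1 : borelT X0))
       (fun p : (Omega * borelT (prod_topology (fun k => U k : ptopologicalType)))%type =>
          (eta ord0 p.1 p.2 : borelT (Y ord0))))
  (* prod_k (Y^k x U^k) is compact *)
  (hcompact : compact
     [set: prod_topology (fun k => ((Y k * U k)%type : topologicalType))])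
  (* c is lower semicontinuous *)
  (c_lsc : lower_semicontinuous c)
  (* measurement kernels p_n(dy^n | omega_0, u^1, ..., u^{n-1}) *)
  (p : forall n : 'I_N.+1,
     X0 -> prod_topology (fun k => U k : ptopologicalType) ->
     probability (borelT (Y n)) R)
  (p_causal : forall (n : 'I_N.+1) x u u',
     (forall k : 'I_N.+1, (k < n)%N -> u k = u' k) -> p n x u = p n x u')
  (p_meas : forall (n : 'I_N.+1) (A : set (borelT (Y n))), measurable A ->
     measurable_fun setT
       (fun xu : (borelT X0 * borelT (prod_topology (fun k => U k : ptopologicalType)))%type =>
          p n xu.1 xu.2 A))
  (* p_n(. | omega_0, u) is a version of P(eta^n(omega, u) \in . | omega_0) *)
  (p_cond : forall (n : 'I_N.+1) (u : prod_topology (fun k => U k : ptopologicalType))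
       (A : set (borelT (Y n))) (B : set (borelT X0)),
     measurable A -> measurable B ->
     P [set omega | B (w0 omega) /\ A (eta n omega u)] =
     (\int[P]_(omega in w0 @^-1` B) p n (w0 omega) u A)%E)
  (* weak continuity of the kernels *)
  (p_weak : forall (n : 'I_N.+1) (f : Y n -> R),
     continuous f -> (exists M : R, forall y, `|f y| <= M) ->
     continuous
       (fun xu : (X0 * prod_topology (fun k => U k : ptopologicalType))%type =>
          (\int[p n xu.1 xu.2]_y (f y)%:E)%E)) :
  exists gamma : forall n : 'I_N.+1, Y n -> U n,
    @policy_measurable N (fun n => Y n : ptopologicalType)
      (fun n => U n : ptopologicalType) gamma /\
    forall gamma' : forall n : 'I_N.+1, Y n -> U n,
      @policy_measurable N (fun n => Y n : ptopologicalType)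
        (fun n => U n : ptopologicalType) gamma' ->
      (team_cost P w0 eta c gamma <= team_cost P w0 eta c gamma')%E.
Proof.
have [Phi [Phi_cont Phi_surj]] :
    exists Phi : cantor_space -> prod_topology (fun k => U k : ptopologicalType),
      continuous Phi /\ forall u, exists t, Phi t = u.
  apply: (@cantor_surj_prod R _ (fun k => U k : pseudoPMetricType R)) => k.
    exact: (@compact_prod_snd _ (fun k => Y k : ptopologicalType)
      (fun k => U k : ptopologicalType) k hcompact).
  exact: (hU k).1.
pose g := fun p : X0 * cantor_space => c (p.1, Phi p.2).
have lsc_g : lower_semicontinuous g := lower_semicontinuous_comp_snd _ _ c_lsc Phi_cont.
pose OmegaU := (Omega * borelT (prod_topology (fun k => U k : ptopologicalType)))%type.
have w0_yk k : sigma_sub (fun p : OmegaU => w0 p.1 : borelT X0)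
                         (fun p : OmegaU => eta k p.1 p.2 : borelT (Y k)).
  have [k0|k_gt0] := posnP k; last exact: sigma_sub_trans w0_y1 (classical ord0 k k_gt0).
  by rewrite (_ : k = ord0) //; exact: val_inj.
have factor k := sigma_sub_cantor_factor (w0_yk k) (greedy_argmin_measurable _ lsc_g).
pose beta k := projT1 (cid (factor k)).
have beta_spec k := projT2 (cid (factor k)).
exists (fun k y => Phi (beta k y) k); split.
  move=> k; apply: (continuous_cantor_bits_measurable (fun t => Phi t k) (beta k)).
    move=> t; apply: (@continuous_comp _ _ _ Phi (proj k)); first exact: Phi_cont.
    exact: proj_continuous.
  exact: (beta_spec k).1.
move=> gamma' _; apply: ge0_le_integral_nomeas => // omega.
rewrite (team_action_static (Phi (greedy_argmin g (w0 omega)))); last first.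
  by move=> k u; have /= -> := (beta_spec k).2 (omega, u).
have [t <-] := Phi_surj (team_action eta gamma' omega).
exact: (greedy_argmin_min _ lsc_g (w0 omega) t).
Qed.
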